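(* Let $F:[0,\infty)\to\mathbb{R}$ be $C^{1,1}$ with $F'(0)=0$ and set $M:=\max\{1,\limsup_{t\downarrow0}|F'(t)|/t\}$. There exist $T>0$, $L=L(M)>1$ (depending only on $M$), and an $L$-bi-Lipschitz map $G:B^2(0,T)\to B^2(0,T)$ with $G(0)=0$ such that for each $s\in\mathbb{S}^1$ the curve $t\mapsto(G(ts),F(|G(ts)|))$ is horizontal. Moreover, $|G(st)|=|G(s't)|$ for any $s,s'\in\mathbb{S}^1$ and $t\in[0,T)$.
   Context: $B^2(0,T)$ is the open Euclidean disc of radius $T$ centred at the origin of $\mathbb{R}^2$, with the Euclidean metric; $\mathbb{S}^1$ is the unit circle. An absolutely continuous curve $(x(t),y(t),z(t))$ in $\mathbb{R}^3$ is horizontal if $z'+\tfrac12x'y-\tfrac12xy'=0$ almost everywhere. $G$ is $L$-bi-Lipschitz if $L^{-1}|a-b|\le|G(a)-G(b)|\le L|a-b|$. *)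

From HB Require Import structures.
From mathcomp Require Import all_boot all_order all_algebra.
From mathcomp Require Import all_classical all_reals all_analysis.
Set Implicit Arguments. Unset Strict Implicit. Unset Printing Implicit Defensive.
Import Order.TTheory GRing.Theory Num.Theory.
Import numFieldNormedType.Exports.
Local Open Scope classical_set_scope.
Local Open Scope ring_scope.

Section defs.
Variable R : realType.

Definition norm2 (p : R * R) : R := Num.sqrt (p.1 ^+ 2 + p.2 ^+ 2).

Definition smul2 (t : R) (s : R * R) : R * R := (t * s.1, t * s.2).

Definition sub2 (p q : R * R) : R * R := (p.1 - q.1, p.2 - q.2).

Definition is_derive_halfline (F F' : R -> R) : Prop :=
  forall x : R, 0 <= x ->
    (fun h : R => (F (x + h) - F x) / h) @ within (fun h : R => 0 <= x + h) (0 : R)^'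
      --> F' x.

Definition C11_halfline (F F' : R -> R) : Prop :=
  is_derive_halfline F F' /\
  exists K : R, forall x y : R, 0 <= x -> 0 <= y -> `|F' x - F' y| <= K * `|x - y|.

Definition abs_cont_on (f : R -> R) (a b : R) : Prop :=
  forall eps : R, 0 < eps -> exists2 delta : R, 0 < delta &
    forall (n : nat) (u v : nat -> R),
      (forall i, (i < n)%N -> a <= u i /\ u i <= v i /\ v i <= b) ->
      (forall i, (i.+1 < n)%N -> v i <= u i.+1) ->
      \sum_(i < n) (v i - u i) < delta ->
      \sum_(i < n) `|f (v i) - f (u i)| < eps.

Definition horizontal_on (x y z : R -> R) (T : R) : Prop :=
  (forall b : R, 0 <= b -> b < T ->
     [/\ abs_cont_on x 0 b, abs_cont_on y 0 b & abs_cont_on z 0 b]) /\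
  exists N : set R, (@lebesgue_measure R).-negligible N /\
    forall t : R, 0 < t -> t < T -> ~ N t ->
      [/\ derivable x t 1, derivable y t 1, derivable z t 1 &
          derive1 z t + 2^-1 * derive1 x t * y t - 2^-1 * x t * derive1 y t = 0].

End defs.

From HB Require Import structures.
From mathcomp Require Import all_boot all_order all_algebra.
From mathcomp Require Import all_classical all_reals all_analysis.
From mathcomp Require Import ring lra.
Import Order.TTheory GRing.Theory Num.Theory.
Import numFieldNormedType.Exports.
Local Open Scope classical_set_scope.
Local Open Scope ring_scope.

(* [G] rotates the circle [|p| = r] by an angle [theta r] chosen with
   [theta'(r) = 2 F'(r) / r^2].  On a ray, [G (t s) = t e^(i theta t) s], so
   the area term [(x y' - x' y) / 2] equals [t^2 theta'(t) / 2 = F'(t)], which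
   is exactly the derivative of the height [F (|G (t s)|) = F t]: the lifted
   curve is horizontal.  Near [0], [|F' t| <= (M + 1) t], hence
   [|theta' r| <= 2 (M + 1) / r]; this scale-invariant bound makes the twist
   Lipschitz with constant [4 (M + 1) + 1], and so is its inverse, the twist
   by [- theta].  The angle itself may diverge at [0]; it only enters through
   rotations. *)

Section PlaneGeometry.
Context {R : realType}.
Implicit Types (p q u v s : R * R) (a b : R).

Definition rot a p : R * R :=
  (cos a * p.1 - sin a * p.2, sin a * p.1 + cos a * p.2).

Definition twist (theta : R -> R) p : R * R := rot (theta (norm2 p)) p.

Lemma norm2_ge0 p : 0 <= norm2 p.
Proof. exact: sqrtr_ge0. Qed.

Lemma sqr_norm2 p : norm2 p ^+ 2 = p.1 ^+ 2 + p.2 ^+ 2.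
Proof. by rewrite sqr_sqrtr // addr_ge0 // sqr_ge0. Qed.

Lemma norm2_fst p : `|p.1| <= norm2 p.
Proof. by rewrite -sqrtr_sqr ler_wsqrtr // lerDl sqr_ge0. Qed.

Lemma norm2_snd p : `|p.2| <= norm2 p.
Proof. by rewrite -sqrtr_sqr ler_wsqrtr // lerDr sqr_ge0. Qed.

Lemma norm2_smul2 t s : norm2 s = 1 -> norm2 (smul2 t s) = `|t|.
Proof.
move=> s1; rewrite /norm2 /smul2 /= !exprMn -mulrDr sqrtrM ?sqr_ge0 //.
by rewrite sqrtr_sqr -/(norm2 s) s1 mulr1.
Qed.

Lemma sub2_smul2 x y s : sub2 (smul2 x s) (smul2 y s) = smul2 (x - y) s.
Proof. by rewrite /sub2 /smul2 /=; congr pair; ring. Qed.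

Lemma norm2_sub2C p q : norm2 (sub2 p q) = norm2 (sub2 q p).
Proof. by rewrite /norm2 /sub2 /=; congr Num.sqrt; ring. Qed.

Lemma dot_le_norm2 u v : u.1 * v.1 + u.2 * v.2 <= norm2 u * norm2 v.
Proof.
apply: (le_trans (ler_norm _)).
rewrite -sqrtr_sqr /norm2 -sqrtrM ?addr_ge0 ?sqr_ge0 // ler_wsqrtr //.
have lagrange : (u.1 ^+ 2 + u.2 ^+ 2) * (v.1 ^+ 2 + v.2 ^+ 2) - (u.1 * v.1 + u.2 * v.2) ^+ 2
    = (u.1 * v.2 - u.2 * v.1) ^+ 2 by ring.
by rewrite -subr_ge0 lagrange sqr_ge0.
Qed.

Lemma norm2_sub2_triangle p q u : norm2 (sub2 p u) <= norm2 (sub2 p q) + norm2 (sub2 q u).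
Proof.
rewrite -ler_sqr ?nnegrE ?addr_ge0 ?norm2_ge0 // sqrrD !sqr_norm2 /sub2 /=.
have := dot_le_norm2 (sub2 p q) (sub2 q u); rewrite /sub2 /= => cs.
have expand : (p.1 - u.1) ^+ 2 + (p.2 - u.2) ^+ 2 = (p.1 - q.1) ^+ 2 + (p.2 - q.2) ^+ 2
  + 2 * ((p.1 - q.1) * (q.1 - u.1) + (p.2 - q.2) * (q.2 - u.2))
  + ((q.1 - u.1) ^+ 2 + (q.2 - u.2) ^+ 2) by ring.
rewrite expand; lra.
Qed.

Lemma ler_norm2_sub p q : norm2 q - norm2 p <= norm2 (sub2 p q).
Proof.
have sub20 r : sub2 r (0, 0) = r by case: r => r1 r2; rewrite /sub2 /= !subr0.
have := norm2_sub2_triangle q p (0, 0); rewrite !sub20 norm2_sub2C; lra.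
Qed.

Lemma rotK a : cancel (rot a) (rot (- a)).
Proof.
move=> [p1 p2]; rewrite /rot /= cosN sinN; have cs := cos2Dsin2 a.
by congr pair; rewrite -[RHS]mul1r -cs; ring.
Qed.

Lemma rot0 a : rot a (0, 0) = (0, 0).
Proof. by rewrite /rot /= !mulr0 subrr addr0. Qed.

Lemma norm2_rot a p : norm2 (rot a p) = norm2 p.
Proof.
rewrite /norm2 /rot /=; congr Num.sqrt.
by rewrite -[RHS]mul1r -(cos2Dsin2 a); ring.
Qed.

Lemma rot_sub2 a p q : rot a (sub2 p q) = sub2 (rot a p) (rot a q).
Proof. by rewrite /rot /sub2 /=; congr pair; ring. Qed.

Lemma norm2_rot_sub2 a p q : norm2 (sub2 (rot a p) (rot a q)) = norm2 (sub2 p q).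
Proof. by rewrite -rot_sub2 norm2_rot. Qed.

End PlaneGeometry.

Section RealFunctions.
Context {R : realType}.

Lemma ler_dist_derive_bound (f df : R -> R) (u v B : R) : u <= v ->
  {within `[u, v], continuous f} ->
  (forall x, x \in `]u, v[ -> is_derive x 1 f (df x)) ->
  (forall x, x \in `]u, v[ -> `|df x| <= B) ->
  `|f v - f u| <= B * (v - u).
Proof.
move=> uv fc fdf dfB; have [<-|ltuv] := eqVneq u v; first by rewrite !subrr normr0 mulr0.
have {}ltuv : u < v by rewrite lt_def eq_sym ltuv.
have [x xuv ->] := MVT ltuv fdf fc.
by rewrite normrM (gtr0_norm (x := v - u)) ?subr_gt0 // ler_wpM2r ?subr_ge0 ?dfB // ltW.
Qed.

Lemma ler_dist_cos (a b : R) : `|cos a - cos b| <= `|a - b|.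
Proof.
wlog ab : a b / b <= a => [hw|].
  by case/orP: (le_total b a) => ?; [|rewrite distrC [`|a - b|]distrC]; apply: hw.
rewrite [`|a - b|]ger0_norm ?subr_ge0 // -[X in _ <= X]mul1r.
apply: (ler_dist_derive_bound _ (fun x => - sin x)) => // [|x _].
- exact/continuous_subspaceT/continuous_cos.
- by rewrite normrN sin_max.
Qed.

Lemma ler_dist_sin (a b : R) : `|sin a - sin b| <= `|a - b|.
Proof.
wlog ab : a b / b <= a => [hw|].
  by case/orP: (le_total b a) => ?; [|rewrite distrC [`|a - b|]distrC]; apply: hw.
rewrite [`|a - b|]ger0_norm ?subr_ge0 // -[X in _ <= X]mul1r.
apply: (ler_dist_derive_bound _ cos) => // [|x _].
- exact/continuous_subspaceT/continuous_sin.
- exact: cos_max.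
Qed.

Lemma near_gt0 {r : R} : 0 < r -> \forall x \near r, 0 < x.
Proof. by move=> r0; apply: (@cvgr_gt _ _ (nbhs r) _ id r cvg_id). Qed.

Lemma locally_lipschitz_continuous (f : R -> R) (K r : R) :
  (\forall x \near r, `|f x - f r| <= K * `|x - r|) -> {for r, continuous f}.
Proof.
move=> fK; apply/cvgrPdist_le => e e0.
have K1 : 0 < `|K| + 1 by rewrite ltr_pwDr // normr_ge0.
have small : \forall x \near r, `|r - x| < e / (`|K| + 1).
  exact: (@cvgr_dist_lt _ _ _ (nbhs r) _ id r cvg_id _ (divr_gt0 e0 K1)).
move: fK small; apply: filterS2 => x fxK xr.
rewrite distrC; apply: (le_trans fxK).
apply: (le_trans (y := (`|K| + 1) * `|x - r|)).
  by rewrite ler_wpM2r // (le_trans (ler_norm K)) // lerDl.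
by rewrite mulrC -ler_pdivlMr // distrC ltW.
Qed.

Lemma lipschitz_abs_cont_on {f : R -> R} {a b K : R} : 0 <= K ->
  (forall x y, a <= x -> x <= b -> a <= y -> y <= b -> `|f x - f y| <= K * `|x - y|) ->
  abs_cont_on f a b.
Proof.
move=> K0 fK eps e0; exists (eps / (K + 1)); first by rewrite divr_gt0 // ltr_pwDr.
move=> n u v uv _ small.
apply: (le_lt_trans (y := K * \sum_(i < n) (v i - u i))).
  rewrite mulr_sumr; apply: ler_sum => i _.
  have [? [? ?]] := uv i (ltn_ord i).
  by rewrite -[v i - u i]ger0_norm ?subr_ge0 // fK //; lra.
apply: (le_lt_trans (y := K * (eps / (K + 1)))); first by rewrite ler_wpM2l // ltW.
by rewrite mulrA ltr_pdivrMr ?ltr_pwDr //; nra.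
Qed.

Lemma antiderivative_exists (g : R -> R) (a b : R) :
  (forall x, a < x -> x <= b -> {for x, continuous g}) ->
  exists G : R -> R, forall r, a < r -> r < b -> is_derive r 1 G (g r).
Proof.
(* Integrating [g (- w)] from [- b] keeps the base point fixed while the
   interval of integration stays away from [- a], where [g] may blow up. *)
move=> gc.
pose P y := (\int[@lebesgue_measure R]_(w in [set` `[- b, y]]) g (- w))%R.
exists (fun r => - P (- r)) => r ar rb.
pose u := - ((r + a) / 2).
have ru : - r < u by rewrite /u; lra.
have gNc w : - b <= w -> w <= u -> {for w, continuous (fun w => g (- w))}.
  move=> bw wu; apply: continuous_comp; first exact: opp_continuous.
  by apply: gc; rewrite /u in wu; lra.
have gNint : (@lebesgue_measure R).-integrable `[- b, u] (EFin \o (fun w => g (- w))).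
  apply: continuous_compact_integrable; first exact: segment_compact.
  apply: continuous_in_subspaceT => w; rewrite inE /= in_itv /= => /andP[bw wu].
  exact: gNc.
have br : - b < - r by rewrite ltrN2.
have [dP DP] := continuous_FTC1_closed ru gNint br (gNc _ (ltW br) (ltW ru)).
have PN : is_derive (- r) 1 P (g (- - r)) by apply: DeriveDef => //; rewrite -derive1E.
have := is_deriveN (is_derive1_comp PN (is_deriveNid r 1)).
by rewrite opprK mulrN1 opprK.
Qed.

End RealFunctions.

Section Twist.
Context {R : realType}.
Implicit Types (theta : R -> R) (p q : R * R) (a b : R).

Lemma norm2_rot_sub_rot a b p :
  norm2 (sub2 (rot a p) (rot b p)) <= 2 * `|a - b| * norm2 p.
Proof.
rewrite -ler_sqr ?nnegrE ?mulr_ge0 ?normr_ge0 ?norm2_ge0 // !exprMn !sqr_norm2 /rot /sub2 /=.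
have sqr_le (x y : R) : `|x| <= y -> x ^+ 2 <= y ^+ 2.
  by move=> xy; rewrite -[x ^+ 2]real_normK ?num_real //; have := normr_ge0 x; nra.
have dc := sqr_le _ _ (ler_dist_cos a b); have ds := sqr_le _ _ (ler_dist_sin a b).
have expand : (cos a * p.1 - sin a * p.2 - (cos b * p.1 - sin b * p.2)) ^+ 2
    + (sin a * p.1 + cos a * p.2 - (sin b * p.1 + cos b * p.2)) ^+ 2
  = ((cos a - cos b) ^+ 2 + (sin a - sin b) ^+ 2) * (p.1 ^+ 2 + p.2 ^+ 2) by ring.
rewrite expand; have := sqr_ge0 `|a - b|; have := sqr_ge0 p.1; have := sqr_ge0 p.2.
nra.
Qed.

Lemma norm2_twist theta p : norm2 (twist theta p) = norm2 p.
Proof. exact: norm2_rot. Qed.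

Lemma twistK theta : cancel (twist theta) (twist (fun r => - theta r)).
Proof. by move=> p; rewrite /twist norm2_twist rotK. Qed.

Lemma twist0 theta : twist theta (0, 0) = (0, 0).
Proof. exact: rot0. Qed.

(* The integrated form of [|theta'(r)| <= C / r] on [0 < r < T]. *)
Definition scaled_lipschitz_on theta (C T : R) := forall r s, 0 < r -> r <= s -> s < T ->
  `|theta s - theta r| <= C * (s - r) / r.

Lemma twist_lipschitz theta (C T : R) p q : 0 <= C -> scaled_lipschitz_on theta C T ->
  norm2 p < T -> norm2 q < T ->
  norm2 (sub2 (twist theta p) (twist theta q)) <= (2 * C + 1) * norm2 (sub2 p q).
Proof.
move=> C0 theta_slope.
wlog pq : p q / norm2 p <= norm2 q => [hw|pT qT].
  case/orP: (le_total (norm2 p) (norm2 q)) => ?; first exact: hw.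
  by rewrite norm2_sub2C [norm2 (sub2 p q)]norm2_sub2C => *; apply: hw.
set d := norm2 (sub2 p q); set a := theta (norm2 p); set b := theta (norm2 q).
have angle_gap : `|a - b| * norm2 p <= C * d.
  have [p0|p0] := eqVneq (norm2 p) 0; first by rewrite p0 mulr0 mulr_ge0 ?norm2_ge0.
  have {}p0 : 0 < norm2 p by rewrite lt_def p0 norm2_ge0.
  rewrite distrC -ler_pdivlMr // (le_trans (theta_slope _ _ p0 pq qT)) // ler_pM2r ?invr_gt0 //.
  by rewrite ler_wpM2l // ler_norm2_sub.
(* Pass through [rot b p]: the angle gap costs [2 C d], the common rotation [d]. *)
rewrite /twist -/a -/b.
have := norm2_sub2_triangle (rot a p) (rot b p) (rot b q).
rewrite norm2_rot_sub2 -/d.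
have := norm2_rot_sub_rot a b p; rewrite -mulrA; clearbody a b d; nra.
Qed.

Lemma twist_bilipschitz theta (C T : R) p q : 0 <= C -> scaled_lipschitz_on theta C T ->
  norm2 p < T -> norm2 q < T ->
  (2 * C + 1)^-1 * norm2 (sub2 p q) <= norm2 (sub2 (twist theta p) (twist theta q)) /\
  norm2 (sub2 (twist theta p) (twist theta q)) <= (2 * C + 1) * norm2 (sub2 p q).
Proof.
move=> C0 theta_slope pT qT; split; last exact: (twist_lipschitz _ C T).
have L0 : 0 < 2 * C + 1 by lra.
rewrite ler_pdivrMl // -{1}(twistK theta p) -{1}(twistK theta q).
apply: (twist_lipschitz _ C T); rewrite ?norm2_twist // => r s r0 rs sT.
by rewrite -opprD normrN theta_slope.
Qed.

Lemma scaled_lipschitz_on_derive {theta dtheta : R -> R} {C T : R} : 0 <= C ->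
  (forall r, 0 < r -> r < T -> is_derive r 1 theta (dtheta r)) ->
  (forall r, 0 < r -> r < T -> `|dtheta r| <= C / r) ->
  scaled_lipschitz_on theta C T.
Proof.
move=> C0 dth dthC r s r0 rs sT.
rewrite mulrAC; apply: (ler_dist_derive_bound _ dtheta) => // [|x|x]; rewrite ?in_itv /=.
- apply: derivable_within_continuous => x; rewrite in_itv /= => /andP[rx xs].
  by have [] := dth x ltac:(lra) ltac:(lra).
- by move=> /andP[rx xs]; apply: dth; lra.
- move=> /andP[rx xs]; apply: (le_trans (dthC x ltac:(lra) ltac:(lra))).
  by rewrite ler_wpM2l // lef_pV2 ?posrE //; lra.
Qed.

Lemma twist_angle_exists {f : R -> R} {c T : R} : 0 <= c ->
  (forall x, 0 < x -> {for x, continuous f}) ->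
  (forall t, 0 < t -> t < T -> `|f t| <= c * t) ->
  exists2 theta : R -> R,
    (forall r, 0 < r -> r < T -> is_derive r 1 theta (2 * f r / r ^+ 2)) &
    scaled_lipschitz_on theta (2 * c) T.
Proof.
move=> c0 fc fct.
have [theta dtheta] : exists theta : R -> R,
    forall r, 0 < r -> r < T -> is_derive r 1 theta (2 * f r / r ^+ 2).
  apply: (antiderivative_exists (fun r => 2 * f r / r ^+ 2) 0 T) => x x0 _.
  apply: cvgM; first by apply: cvgM; [exact: cvg_cst | exact: fc].
  by apply: cvgV; [rewrite expf_neq0 ?gt_eqF | rewrite expr2; apply: cvgM; exact: cvg_id].
exists theta => //; apply: (scaled_lipschitz_on_derive _ dtheta) => [|r r0 rT].
  by rewrite mulr_ge0.
rewrite !normrM normfV normrX (gtr0_norm r0) [`|2|]ger0_norm //.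
rewrite ler_pdivrMr ?exprn_gt0 // expr2 mulrA divfK ?gt_eqF // -mulrA ler_wpM2l //.
exact: fct.
Qed.

End Twist.

Lemma cvg_within_near {T : Type} {U : topologicalType} {F : set_system T} {FF : Filter F}
    {D : set T} {f : T -> U} {l : U} :
  (\forall x \near F, D x) -> f @ within D F --> l -> f @ F --> l.
Proof. by move=> FD fl A /fl; rewrite /= /within /=; apply: filterS2 FD => x Dx; apply. Qed.

Section HalflineDerivative.
Context {R : realType}.
Context {F F' : R -> R}.
Hypothesis F'F : is_derive_halfline F F'.

Lemma is_derive_halfline_is_derive (x : R) : 0 < x -> is_derive x 1 F (F' x).
Proof.
move=> x0.
have x_nonneg : \forall h \near (0 : R)^', 0 <= x + h.
  apply: (@cvg_within _ (nbhs (0 : R)) _ (fun h => h != 0)).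
  apply: filterS (@cvgr_dist_lt _ _ _ (nbhs (0 : R)) _ id 0 cvg_id _ x0) => h.
  by rewrite sub0r normrN ltr_norml => /andP[hx _]; lra.
have dq : (fun h : R => h^-1 *: (F (h *: 1 + x) - F x)) @ (0 : R)^' --> F' x.
  apply: (cvg_trans _ (cvg_within_near x_nonneg (F'F x (ltW x0)))).
  by apply: near_eq_cvg; near=> h; rewrite /= -[h%:A]/(h * 1) mulr1 [x + h]addrC mulrC.
by apply: DeriveDef; [apply/cvg_ex; exists (F' x) | exact/cvg_lim].
Unshelve. all: by end_near. Qed.

Lemma is_derive_halfline_cvg0 : F x @[x --> (0 : R)^'+] --> F 0.
Proof.
have dq : (fun h => (F (0 + h) - F 0) / h) @ (0 : R)^'+ --> F' 0.
  apply: (cvg_trans _ (F'F 0 (lexx 0))); apply: cvg_app => A.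
  move=> /nbhs_ballP [e e0 Ae]; apply/nbhs_ballP; exists e => // h hb h0.
  by apply: Ae => //; rewrite ?gt_eqF // add0r ltW.
have : (fun h => F 0 + h * ((F (0 + h) - F 0) / h)) @ (0 : R)^'+ --> F 0 + 0 * F' 0.
  by apply: cvgD; [exact: cvg_cst | apply: cvgM => //; exact/cvg_at_right_filter/cvg_id].
rewrite mul0r addr0; apply: cvg_trans; apply: near_eq_cvg; near=> h.
have h0 : 0 < h by near: h; exact: nbhs_right_gt.
by rewrite add0r mulrC divfK ?gt_eqF // addrC subrK.
Unshelve. all: by end_near. Qed.

Lemma is_derive_halfline_continuous : {within `[0, +oo[, continuous F}.
Proof.
apply/continuous_within_itvcyP; split; last exact: is_derive_halfline_cvg0.
move=> x; rewrite in_itv andbT => x0.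
apply/differentiable_continuous/derivable1_diffP.
by have [] := is_derive_halfline_is_derive x x0.
Qed.

Lemma is_derive_halfline_ler_dist (B b x y : R) :
  (forall t, 0 < t -> t < b -> `|F' t| <= B) ->
  0 <= x -> x <= b -> 0 <= y -> y <= b -> `|F x - F y| <= B * `|x - y|.
Proof.
move=> F'B.
wlog yx : x y / y <= x => [hw|x0 xb y0 yb].
  by case/orP: (le_total y x) => ? *; [|rewrite distrC [`|x - y|]distrC]; apply: hw.
rewrite [`|x - y|]ger0_norm ?subr_ge0 //.
apply: (ler_dist_derive_bound _ F') => // [|t|t].
- apply: continuous_subspaceW is_derive_halfline_continuous.
  by apply: subset_itv; rewrite bnd_simp.
- by rewrite in_itv /= => /andP[yt tx]; apply: is_derive_halfline_is_derive; lra.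
- by rewrite in_itv /= => /andP[yt tx]; apply: F'B; lra.
Qed.

End HalflineDerivative.

Section LimfEsup.
Context {T : choiceType} {X : filteredType T} {R : realType}.
Implicit Types (f : X -> \bar R) (F : set_system X).
Local Open Scope ereal_scope.

Lemma limf_esup_le f F (V : set X) (a : \bar R) :
  F V -> (forall x, V x -> f x <= a) -> limf_esup f F <= a.
Proof.
move=> FV fa; apply: (le_trans (ereal_inf_lbound _)); first by exists V.
by apply: ge_ereal_sup => _ [x Vx <-]; exact: fa.
Qed.

Lemma limf_esup_lt_near f F {FF : Filter F} (a : \bar R) :
  limf_esup f F < a -> \forall x \near F, f x < a.
Proof.
move=> /ereal_inf_lt [_ [V FV <-] supVa]; apply: filterS FV => x Vx.
by apply: le_lt_trans supVa; apply: ereal_sup_ubound; exists x.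
Qed.

End LimfEsup.

Section SlopeLimsup.
Context {R : realType}.

Lemma slope_limsup_bound {f : R -> R} {K : R} :
  (forall t, 0 < t -> `|f t| <= K * t) ->
  let M := maxe 1%E (limf_esup (fun t : R => (`|f t| / t)%:E) (0 : R)^'+) in
  M \is a fin_num /\
  exists2 d : R, 0 < d & forall t, 0 < t -> t < d -> `|f t| <= (fine M + 1) * t.
Proof.
move=> fK M; set slope := (fun t : R => (`|f t| / t)%:E) in M *.
have limsup_K : (limf_esup slope (0 : R)^'+ <= K%:E)%E.
  apply: (limf_esup_le _ _ [set t : R | 0 < t]) => [|t /= t0].
    exact: nbhs_right_gt.
  by rewrite lee_fin ler_pdivrMr // fK.
have M1 : (1 <= M)%E by rewrite le_max lexx.
have Mfin : M \is a fin_num.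
  rewrite ge0_fin_numE ?(le_trans _ M1) // /M gt_max ltry /=.
  exact: le_lt_trans limsup_K (ltry _).
split => //.
have : (limf_esup slope (0 : R)^'+ < (fine M + 1)%:E)%E.
  apply: (le_lt_trans (y := M)); first by rewrite le_max lexx orbT.
  by rewrite -[X in (X < _)%E](fineK Mfin) lte_fin ltrDl.
move=> /limf_esup_lt_near /nbhs_ballP [d d0 near0]; exists d => // t t0 td.
have := near0 t; rewrite /ball /= sub0r normrN gtr0_norm // => /(_ td t0).
by rewrite lte_fin ltr_pdivrMr // => /ltW.
Qed.

End SlopeLimsup.

Section Horizontality.
Context {R : realType}.
Implicit Types (theta : R -> R) (s : R * R).

Lemma is_derive_rot_ray {theta} s {t dtheta : R} : is_derive t 1 theta dtheta ->
  is_derive t 1 (fun u => (rot (theta u) (smul2 u s)).1)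
    ((rot (theta t) s).1 - t * dtheta * (rot (theta t) s).2) /\
  is_derive t 1 (fun u => (rot (theta u) (smul2 u s)).2)
    ((rot (theta t) s).2 + t * dtheta * (rot (theta t) s).1).
Proof.
move=> dth.
have dc : is_derive t 1 (cos \o theta) (- sin (theta t) * dtheta) by exact: is_derive1_comp.
have ds : is_derive t 1 (sin \o theta) (cos (theta t) * dtheta) by exact: is_derive1_comp.
have dl a : is_derive t 1 (fun u : R => u * a) a.
  have := is_deriveM (is_derive_id t 1) (is_derive_cst a t 1).
  by rewrite scaler0 add0r /GRing.scale /= mulr1.
rewrite /rot /smul2 /=; split.
- apply: (is_derive_eq (is_deriveB (is_deriveM dc (dl s.1)) (is_deriveM ds (dl s.2)))).
  by rewrite /GRing.scale /=; ring.
- apply: (is_derive_eq (is_deriveD (is_deriveM ds (dl s.1)) (is_deriveM dc (dl s.2)))).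
  by rewrite /GRing.scale /=; ring.
Qed.

Lemma rot_smul2 (a u : R) s : rot a (smul2 u s) = smul2 u (rot a s).
Proof. by rewrite /rot /smul2 /=; congr pair; ring. Qed.

Lemma twist_smul2 theta s (u : R) : norm2 s = 1 -> 0 <= u ->
  twist theta (smul2 u s) = rot (theta u) (smul2 u s).
Proof. by move=> s1 u0; rewrite /twist norm2_smul2 // ger0_norm. Qed.

Lemma twist_ray_horizontal_at (F F' : R -> R) theta s (t : R) :
  0 < t -> norm2 s = 1 -> is_derive t 1 F (F' t) ->
  is_derive t 1 theta (2 * F' t / t ^+ 2) ->
  let x u := (twist theta (smul2 u s)).1 in
  let y u := (twist theta (smul2 u s)).2 in
  let z u := F (norm2 (twist theta (smul2 u s))) in
  [/\ derivable x t 1, derivable y t 1, derivable z t 1 &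
      derive1 z t + 2^-1 * derive1 x t * y t - 2^-1 * x t * derive1 y t = 0].
Proof.
move=> t0 s1 dF dth x y z.
have [dx dy] := is_derive_rot_ray s dth.
have on_ray : \forall u \near t, twist theta (smul2 u s) = rot (theta u) (smul2 u s).
  near=> u; have u0 : 0 < u by near: u; exact: near_gt0.
  by rewrite twist_smul2 // ltW.
have [xd Dx] := near_eq_is_derive (g := x) (filterS (fun u e => congr1 fst (esym e)) on_ray) dx.
have [yd Dy] := near_eq_is_derive (g := y) (filterS (fun u e => congr1 snd (esym e)) on_ray) dy.
have z_on_ray : \forall u \near t, F u = z u.
  near=> u; have u0 : 0 < u by near: u; exact: near_gt0.
  by rewrite /z norm2_twist norm2_smul2 // gtr0_norm.
have [zd Dz] := near_eq_is_derive z_on_ray dF.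
split => //; rewrite !derive1E Dx Dy Dz /x /y twist_smul2 ?ltW // rot_smul2 /smul2 /=.
have r1 : (rot (theta t) s).1 ^+ 2 + (rot (theta t) s).2 ^+ 2 = 1.
  by rewrite -sqr_norm2 norm2_rot s1 expr1n.
set r := rot (theta t) s in r1 *.
have -> : forall a g : R, a + 2^-1 * (r.1 - t * g * r.2) * (t * r.2)
    - 2^-1 * (t * r.1) * (r.2 + t * g * r.1) = a - 2^-1 * t ^+ 2 * g * (r.1 ^+ 2 + r.2 ^+ 2).
  by move=> *; ring.
by rewrite r1; field; rewrite gt_eqF.
Unshelve. all: by end_near. Qed.

Lemma twist_ray_horizontal (F F' : R -> R) theta (B C T : R) s :
  is_derive_halfline F F' -> 0 <= B -> (forall t, 0 < t -> t < T -> `|F' t| <= B) ->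
  0 <= C -> scaled_lipschitz_on theta C T ->
  (forall r, 0 < r -> r < T -> is_derive r 1 theta (2 * F' r / r ^+ 2)) ->
  norm2 s = 1 ->
  horizontal_on (fun t => (twist theta (smul2 t s)).1) (fun t => (twist theta (smul2 t s)).2)
    (fun t => F (norm2 (twist theta (smul2 t s)))) T.
Proof.
move=> F'F B0 F'B C0 theta_slope dth s1.
have ray_lip u v : 0 <= u -> u < T -> 0 <= v -> v < T ->
    norm2 (sub2 (twist theta (smul2 u s)) (twist theta (smul2 v s))) <= (2 * C + 1) * `|u - v|.
  move=> u0 uT v0 vT; rewrite -(norm2_smul2 (u - v) s s1) -sub2_smul2.
  by apply: (twist_lipschitz _ C T); rewrite ?norm2_smul2 ?ger0_norm.
have L0 : 0 <= 2 * C + 1 by lra.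
split=> [b b0 bT|].
  split.
  - apply: (lipschitz_abs_cont_on L0) => u v u0 ub v0 vb.
    apply: le_trans (norm2_fst (sub2 (twist theta (smul2 u s)) (twist theta (smul2 v s)))) _.
    by apply: ray_lip; lra.
  - apply: (lipschitz_abs_cont_on L0) => u v u0 ub v0 vb.
    apply: le_trans (norm2_snd (sub2 (twist theta (smul2 u s)) (twist theta (smul2 v s)))) _.
    by apply: ray_lip; lra.
  - apply: (lipschitz_abs_cont_on B0) => u v u0 ub v0 vb.
    rewrite !norm2_twist !norm2_smul2 // (ger0_norm u0) (ger0_norm v0).
    by apply: (is_derive_halfline_ler_dist F'F B T); rewrite ?F'B //; lra.
exists set0; split=> [|t t0 tT _]; first exact: negligible_set0.
apply: twist_ray_horizontal_at => //; last exact: dth.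
exact: is_derive_halfline_is_derive.
Qed.

End Horizontality.

Theorem lemma5p3 (R : realType) :
  exists Lf : \bar R -> R,
  forall F F' : R -> R,
    C11_halfline F F' ->
    F' 0 = 0 ->
    let M : \bar R :=
      maxe 1%E (limf_esup (fun t : R => (`|F' t| / t)%:E) (0 : R)^'+) in
    let L := Lf M in
    1 < L /\
    exists T : R, 0 < T /\
    exists G : R * R -> R * R,
      [/\ (forall p, norm2 p < T -> norm2 (G p) < T),
          (forall p q, norm2 p < T -> norm2 q < T ->
             L^-1 * norm2 (sub2 p q) <= norm2 (sub2 (G p) (G q)) /\
             norm2 (sub2 (G p) (G q)) <= L * norm2 (sub2 p q)),
          G (0, 0) = (0, 0),
          (forall s, norm2 s = 1 ->
             horizontal_on (fun t => (G (smul2 t s)).1) (fun t => (G (smul2 t s)).2)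
                           (fun t => F (norm2 (G (smul2 t s)))) T) &
          (forall s s' t, norm2 s = 1 -> norm2 s' = 1 -> 0 <= t -> t < T ->
             norm2 (G (smul2 t s)) = norm2 (G (smul2 t s')))].
Proof.
exists (fun M => 4 * fine M + 5).
move=> F F' [F'F [K F'K]] F'0 M L.
have slopeK t : 0 < t -> `|F' t| <= K * t.
  by move=> t0; have := F'K t 0 (ltW t0) (lexx 0); rewrite F'0 !subr0 (gtr0_norm t0).
have [Mfin [T T0 F'c]] := slope_limsup_bound slopeK.
rewrite -/M in Mfin F'c; set c := fine M + 1 in F'c.
have c0 : 0 < c.
  have M1 : (1 <= M)%E by rewrite le_max lexx.
  by rewrite /c ltr_pwDr // fine_ge0 // (le_trans _ M1).
have F'cont x : 0 < x -> {for x, continuous F'}.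
  move=> x0; apply: (locally_lipschitz_continuous _ K).
  by move: (near_gt0 x0); apply: filterS => u u0; apply: F'K; rewrite ltW.
have [theta dtheta theta_slope] := twist_angle_exists (ltW c0) F'cont F'c.
have L_def : L = 2 * (2 * c) + 1 by rewrite /L /c; ring.
split; first lra.
exists T; split => //; exists (twist theta); split.
- by move=> p; rewrite norm2_twist.
- by move=> p q pT qT; rewrite L_def; apply: (twist_bilipschitz _ _ T) => //; lra.
- exact: twist0.
- move=> s s1; apply: (twist_ray_horizontal _ _ _ (c * T) (2 * c)) => //; try lra.
    by rewrite mulr_ge0 //; lra.
  move=> t t0 tT; apply: (le_trans (F'c _ t0 tT)); rewrite ler_wpM2l //; lra.
- by move=> s s' t s1 s1' t0 _; rewrite !norm2_twist !norm2_smul2.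
Qed.
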